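(* Let $\boldsymbol{d}$ be a graphical degree sequence with minimum degree at least $3$. Let $(G,H)$ be a switch on $\mathcal{G}(n,\boldsymbol{d})$ which removes the edges $a_1a_2,a_3a_4$ and inserts the edges $a_1a_3,a_2a_4$. Let $D=\{a_1,a_2,a_3,a_4\}$ and $A_i=N(a_i)\setminus D$ for $i\in[4]$. Suppose at least one of the following holds: (i) at least one of the diagonals $a_1a_4$, $a_2a_3$ is an edge of $G$; (ii) neither diagonal is an edge of $G$, and some pair of distinct elements of $D$ has a common neighbour in $[n]\setminus D$; (iii) for some $j\in[4]$ there is a triangle in $G$ on vertices $a_j,u,w$ with $\{u,w\}\cap D=\emptyset$ and $u\notin A_{5-j}$. Then there is a triangle-switch simulation path of length at most $4$ from $G$ to $H$.
   Context: $\mathcal{G}(n,\boldsymbol{d})$ is the set of labelled simple graphs on $[n]$ with vertex $i$ of degree $d_i$. A switch $(G,H)$ on $\mathcal{G}(n,\boldsymbol{d})$: $G\in\mathcal{G}(n,\boldsymbol{d})$, $F$ is a set of two vertex-disjoint edges of $G$ on vertex set $\{a_1,a_2,a_3,a_4\}$, $F'$ is a different perfect matching of these four vertices with $F'\cap(E(G)\setminus F)=\emptyset$, and $H$ has edge set $(E(G)\setminus F)\cup F'$. A triangle switch is a switch $(G,H)$ such that for some pair $aa'\in F\cup F'$, $a$ and $a'$ have a common neighbour in $G$ outside $\{a_1,a_2,a_3,a_4\}$. $N(a)$ denotes the neighbourhood of $a$ in $G$. A triangle-switch simulation path of length $\kappa$ from $G$ to $H$ is a sequence $G=X_0,X_1,\dots,X_\kappa=H$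 of graphs in $\mathcal{G}(n,\boldsymbol{d})$ such that each $(X_i,X_{i+1})$ is a triangle switch. *)

From mathcomp Require Import all_boot.
Set Implicit Arguments. Unset Strict Implicit. Unset Printing Implicit Defensive.

(* A labelled graph on [n] (vertices 'I_n) given by its edge set; an edge is a
   set of vertices (of size 2 for simple graphs). *)
Definition graph (n : nat) := {set {set 'I_n}}.

Section Graphs.
Variable n : nat.

Definition simple_graph (G : graph n) : Prop :=
  forall e, e \in G -> #|e| = 2.

Definition deg (G : graph n) (v : 'I_n) : nat := #|[set e in G | v \in e]|.

Definition in_Gnd (d : 'I_n -> nat) (G : graph n) : Prop :=
  simple_graph G /\ forall v, deg G v = d v.

Definition graphical (d : 'I_n -> nat) : Prop := exists G, in_Gnd d G.

Definition nbhd (G : graph n) (a : 'I_n) : {set 'I_n} := [set v | [set a; v] \in G].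

Definition perfect_matching_of (M : {set {set 'I_n}}) (S : {set 'I_n}) : Prop :=
  (forall e, e \in M -> #|e| = 2) /\
  (forall e1 e2, e1 \in M -> e2 \in M -> e1 != e2 -> [disjoint e1 & e2]) /\
  cover M = S.

Definition switch_via (d : 'I_n -> nat) (G H : graph n) (F F' : {set {set 'I_n}}) : Prop :=
  [/\ in_Gnd d G, F \subset G, #|F| = 2,
      perfect_matching_of F (cover F) (* two vertex-disjoint edges *) &
      [/\ perfect_matching_of F' (cover F), F' != F,
          F' :&: (G :\: F) = set0 & H = (G :\: F) :|: F'] ].

Definition triangle_switch (d : 'I_n -> nat) (G H : graph n) : Prop :=
  exists F F', switch_via d G H F F' /\
    exists a a', [set a; a'] \in F :|: F' /\
      exists v, [/\ v \notin cover F, v \in nbhd G a & v \in nbhd G a'].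

Definition tss_path (d : 'I_n -> nat) (G H : graph n) (k : nat) : Prop :=
  exists s : seq (graph n), [/\ size s = k, last G s = H &
    forall i, i < k -> triangle_switch d (nth G (G :: s) i) (nth G s i)].

Definition quad (a1 a2 a3 a4 : 'I_n) (j : 'I_4) : 'I_n :=
  nth a1 [:: a1; a2; a3; a4] j.
End Graphs.

From mathcomp Require Import all_boot.
Set Implicit Arguments. Unset Strict Implicit. Unset Printing Implicit Defensive.

(* Every step of the paths is a switch [switch X p q r s] (delete pq and rs, insert pr and qs),
   which is a triangle switch as soon as one of the pairs pq, rs, pr, qs has a common
   neighbour outside {p, q, r, s}.
   In case (ii) a common neighbour of such a pair gives one step, and a common neighbour
   of a diagonal gives two, passing through the graph in which both diagonals are inserted.
   In case (iii), with the triangle a1 u w and u not adjacent to a4, first switch with u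
   in the place of a2, then exchange u and a2 back; w is a common neighbour of a1 and u
   in both steps.
   In case (i), say a1a4 is an edge.  A neighbour of a3 outside D that is not adjacent to
   a2 gives two steps with a4 as common neighbour, and symmetrically with a2, a3 and a1.
   Otherwise a2 and a3 have the same neighbours outside D, and as a3 has degree at least 3
   it has two of them, x and y; according to the edges between a4 and {x, y} and between
   a2 and a3, this gives a path of length 1, 2 or 4. *)

Lemma eq_set2 (T : finType) (a b c e : T) :
  ([set a; b] == [set c; e]) = (a == c) && (b == e) || (a == e) && (b == c).
Proof.
apply/eqP/idP => [E|/orP[]/andP[/eqP-> /eqP->] //]; last exact: setUC.
have:= set21 c e; have := set22 c e; rewrite -E !inE.
have:= set21 a b; have := set22 a b; rewrite E !inE.
by do 4!case/orP=> /eqP ?; subst; rewrite ?eqxx ?orbT ?orbb.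
Qed.

Lemma disjoint_set2 (T : finType) (a b c e : T) :
  [disjoint [set a; b] & [set c; e]] = [&& a != c, a != e, b != c & b != e].
Proof. by rewrite disjoints_subset subUset !sub1set !inE !negb_or -!andbA. Qed.

Lemma uniq4 (T : eqType) (p q r s : T) :
  uniq [:: p; q; r; s] = [&& p != q, p != r, p != s, q != r, q != s & r != s].
Proof. by rewrite /= !inE !negb_or !andbT -!andbA. Qed.

Lemma cover_set2 (T : finType) (A B : {set T}) : cover [set A; B] = A :|: B.
Proof. by rewrite /cover bigcup_setU !big_set1. Qed.

Lemma nat_in_set2 (T : finType) (a b v : T) :
  a != b -> (v \in [set a; b]) = (v == a) + (v == b) :> nat.
Proof. by move=> ab; rewrite !inE; case: eqVneq => [->|] //=; rewrite (negbTE ab). Qed.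

Lemma card_incident_set2 (T : finType) (A B : {set T}) (v : T) :
  A != B -> #|[set e in [set A; B] | v \in e]| = (v \in A) + (v \in B).
Proof.
move=> AB; rewrite -sum1_card (eq_bigl (fun e => (e \in [set A; B]) && (v \in e))) => [|e].
  by rewrite big_mkcondr big_setU1 ?big_set1 //= inE; case: (v \in A); case: (v \in B).
by rewrite inE.
Qed.

Lemma card_incident_split (T : finType) (E F : {set {set T}}) (v : T) :
  #|[set e in E | v \in e]| =
  #|[set e in E :&: F | v \in e]| + #|[set e in E :\: F | v \in e]|.
Proof.
rewrite -(cardsID F [set e in E | v \in e]).
by congr (_ + _); apply: eq_card => e; rewrite !inE ?andbA // andbAC.
Qed.

Definition switch n (X : graph n) (p q r s : 'I_n) : graph n :=
  (X :\: [set [set p; q]; [set r; s]]) :|: [set [set p; r]; [set q; s]].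

Definition switchable n (X : graph n) (p q r s : 'I_n) : bool :=
  [&& uniq [:: p; q; r; s], [set p; q] \in X, [set r; s] \in X,
      [set p; r] \notin X & [set q; s] \notin X].

Definition common_nbr n (X : graph n) (a b v : 'I_n) : bool :=
  ([set a; v] \in X) && ([set b; v] \in X).

Lemma in_switch n (X : graph n) p q r s e : (e \in switch X p q r s) =
  [&& e \in X, e != [set p; q] & e != [set r; s]] || (e == [set p; r]) || (e == [set q; s]).
Proof. by rewrite !inE negb_or andbC orbA. Qed.

Lemma switchableP n (X : graph n) p q r s : switchable X p q r s ->
  [/\ [&& p != q, p != r, p != s, q != r, q != s & r != s],
      [set p; q] \in X, [set r; s] \in X, [set p; r] \notin X & [set q; s] \notin X].
Proof. by rewrite /switchable uniq4 => /and5P. Qed.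

Lemma notin_set4 (T : finType) (v a b c e : T) :
  v \notin [set a; b; c; e] -> [/\ v != a, v != b, v != c & v != e].
Proof. by rewrite !inE !negb_or -!andbA => /and4P. Qed.

Ltac split_graph_facts := repeat match goal with
  | H : is_true (switchable _ _ _ _ _) |- _ =>
      case/switchableP: (H) => /and5P[? ? ? ? /andP[? ?]] ? ? ? ?; clear H
  | H : is_true (uniq [:: _; _; _; _]) |- _ =>
      rewrite uniq4 in H; case/and5P: H => ? ? ? ? /andP[? ?]
  | H : is_true (_ \notin _) |- _ => case/notin_set4: (H) => ? ? ? ?; clear H
  | H : is_true (common_nbr _ _ _ _) |- _ => case/andP: (H) => ? ?; clear H
  end.

Ltac rewrite_graph_facts := repeat match goal with
  | H : is_true (?a != ?b) |- context [?a == ?b] => rewrite (negbTE H)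
  | H : is_true (?a != ?b) |- context [?b == ?a] => rewrite [b == a]eq_sym (negbTE H)
  | H : is_true ([set ?a; ?b] \in ?X) |- context [[set ?a; ?b] \in ?X] => rewrite H
  | H : is_true ([set ?a; ?b] \in ?X) |- context [[set ?b; ?a] \in ?X] =>
      rewrite [[set b; a]]setUC H
  | H : is_true ([set ?a; ?b] \notin ?X) |- context [[set ?a; ?b] \in ?X] =>
      rewrite (negbTE H)
  | H : is_true ([set ?a; ?b] \notin ?X) |- context [[set ?b; ?a] \in ?X] =>
      rewrite [[set b; a]]setUC (negbTE H)
  end.

Ltac graph_solve :=
  split_graph_facts;
  repeat match goal with H : is_true ([set _; _] != [set _; _]) |- _ => move: H end;
  rewrite /switchable /common_nbr ?uniq4 ?in_switch ?inE ?eq_set2 ?eqxx /=; rewrite_graph_facts;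
  rewrite /= ?eqxx ?(andbT, andbF, orbT, orbF, andTb, andFb, orTb, orFb) /=; by [].

Ltac switch_ext :=
  let e := fresh "e" in apply/setP => e; rewrite ?in_switch ?inE;
  repeat match goal with
    |- context [e == ?E] => case: (eqVneq e E) => [?|?]; [subst e|]
  end;
  graph_solve.

Section Switching.
Variables (n : nat) (d : 'I_n -> nat).
Implicit Types (X Y Z : graph n) (a b p q r s v : 'I_n).

Lemma switch_flip X p q r s : switch X p q r s = switch X q p s r.
Proof. by rewrite /switch [[set q; p]]setUC [[set s; r]]setUC [[set [set q; s]; _]]setUC. Qed.

Lemma switch_swap X p q r s : switch X p q r s = switch X r s p q.
Proof.
by rewrite /switch [[set r; p]]setUC [[set s; q]]setUC [[set [set r; s]; _]]setUC.
Qed.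

Lemma switchable_flip X p q r s : switchable X p q r s -> switchable X q p s r.
Proof. by move=> ?; graph_solve. Qed.

Lemma switchable_swap X p q r s : switchable X p q r s -> switchable X r s p q.
Proof. by move=> ?; graph_solve. Qed.

Lemma edge_neq X a b : simple_graph X -> [set a; b] \in X -> a != b.
Proof. by move=> sX /sX; rewrite cards2; case: eqVneq. Qed.

Lemma edge_at X e v : simple_graph X -> e \in X -> v \in e -> exists w, e = [set v; w].
Proof.
move=> sX /sX/eqP/cards2P[x [y [_ ->]]]; rewrite !inE.
by case/orP=> /eqP->; [exists y | exists x; rewrite setUC].
Qed.

Lemma perfect_matching_set2 a b p q : uniq [:: a; b; p; q] ->
  perfect_matching_of [set [set a; b]; [set p; q]] ([set a; b] :|: [set p; q]).
Proof.
move=> abpq; split; [|split; last exact: cover_set2].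
  by move=> e; rewrite !inE => /orP[]/eqP->; rewrite cards2; graph_solve.
move=> e1 e2; rewrite !inE => /orP[]/eqP-> /orP[]/eqP->; rewrite ?eqxx // => _;
  by rewrite ?(disjoint_sym [set p; q]) disjoint_set2; graph_solve.
Qed.

Lemma switch_Gnd X p q r s :
  in_Gnd d X -> switchable X p q r s -> in_Gnd d (switch X p q r s).
Proof.
move=> [sX dX] Xsw.
have /switchableP[/and5P[pq pr ps qr /andP[qs rs]] pqX rsX prX qsX] := Xsw.
split.
  move=> e; rewrite in_switch => /orP[/orP[/and3P[/sX //]|]|] /eqP->;
    by rewrite cards2; graph_solve.
move=> v; rewrite -dX /deg.
set F := [set [set p; q]; [set r; s]]; set F' := [set [set p; r]; [set q; s]].
rewrite (card_incident_split X F) (card_incident_split (switch X p q r s) F').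
have -> : X :&: F = F.
  by apply/setIidPr/subsetP => e; rewrite !inE => /orP[]/eqP->; graph_solve.
have -> : switch X p q r s :&: F' = F'.
  by apply/setIidPr/subsetP => e; rewrite in_switch !inE => /orP[]->; rewrite ?orbT.
have -> : switch X p q r s :\: F' = X :\: F by switch_ext.
have FF : [set p; q] != [set r; s] by graph_solve.
have FF' : [set p; r] != [set q; s] by graph_solve.
by congr (_ + _); rewrite !card_incident_set2 // !nat_in_set2 // addnACA.
Qed.

Lemma switch_viaE X Y p q r s :
  switch_via d X Y [set [set p; q]; [set r; s]] [set [set p; r]; [set q; s]] <->
  [/\ in_Gnd d X, switchable X p q r s & Y = switch X p q r s].
Proof.
split=> [[GX FX] | [GX Xsw ->]].
  rewrite cards2 => cardF [_ [disjF _]] [_ _ F'X ->].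
  have FF : [set p; q] != [set r; s] by move: cardF; case: eqVneq.
  have := disjF _ _ (set21 _ _) (set22 _ _) FF; rewrite disjoint_set2.
  have pqX : [set p; q] \in X by rewrite (subsetP FX) ?set21.
  have rsX : [set r; s] \in X by rewrite (subsetP FX) ?set22.
  have := edge_neq (proj1 GX) pqX; have := edge_neq (proj1 GX) rsX.
  have notX e : e \in [set [set p; r]; [set q; s]] ->
      e \notin [set [set p; q]; [set r; s]] -> e \notin X.
    move=> eF' eF; apply/negP => eX; move/setP: F'X => /(_ e).
    by rewrite in_setI in_setD eF' (negbTE eF) eX in_set0.
  move=> ? ? /and4P[? ? ? ?]; split=> //.
  by rewrite /switchable uniq4 pqX rsX !notX; graph_solve.
split=> //.
- by apply/subsetP => e; rewrite !inE => /orP[]/eqP->; graph_solve.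
- by rewrite cards2 eq_set2; graph_solve.
- by rewrite cover_set2; apply: perfect_matching_set2; graph_solve.
split.
- rewrite cover_set2 setUACA; apply: perfect_matching_set2; graph_solve.
- by apply/eqP => /setP/(_ [set p; r]); rewrite !inE; graph_solve.
- by apply/setP => e; rewrite !inE; apply/negP => /andP[/orP[]/eqP->]; graph_solve.
- by [].
Qed.

Lemma triangle_switch_switch X p q r s v :
  in_Gnd d X -> switchable X p q r s -> v \notin [set p; q; r; s] ->
  [|| common_nbr X p q v, common_nbr X r s v, common_nbr X p r v | common_nbr X q s v] ->
  triangle_switch d X (switch X p q r s).
Proof.
move=> GX Xsw vD vpair.
exists [set [set p; q]; [set r; s]], [set [set p; r]; [set q; s]]; split.
  exact/switch_viaE.
have vF : v \notin cover [set [set p; q]; [set r; s]] by rewrite cover_set2 setUA.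
case/or4P: vpair => /andP[av a'v];
  [exists p, q | exists r, s | exists p, r | exists q, s];
  by split; [rewrite !inE eqxx ?orbT | exists v; rewrite ?inE].
Qed.

Lemma tss_path0 X : tss_path d X X 0.
Proof. by exists [::]. Qed.

Lemma tss_path_cons X Y Z k :
  triangle_switch d X Y -> tss_path d Y Z k -> tss_path d X Z k.+1.
Proof.
move=> XY [t [size_t last_t steps]]; exists (Y :: t); split; rewrite /= ?size_t //.
case=> [|i] //= lt_ik; have lt_it : i < size t by rewrite size_t.
by rewrite (set_nth_default Y) 1?ltnW // (set_nth_default Y) //; apply: steps; rewrite -size_t.
Qed.

(* The continuation receives the degree condition of the switched graph, so that chains
   of switches are built one step at a time. *)
Lemma tss_path_switch X Y k p q r s v :
  in_Gnd d X -> switchable X p q r s -> v \notin [set p; q; r; s] ->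
  [|| common_nbr X p q v, common_nbr X r s v, common_nbr X p r v | common_nbr X q s v] ->
  (in_Gnd d (switch X p q r s) -> tss_path d (switch X p q r s) Y k) ->
  tss_path d X Y k.+1.
Proof.
move=> GX Xsw vD vpair path_rest.
exact: tss_path_cons (triangle_switch_switch GX Xsw vD vpair) (path_rest (switch_Gnd GX Xsw)).
Qed.

Lemma exists_nbr_avoiding X v c1 c2 : in_Gnd d X -> 3 <= d v ->
  exists2 w, [set v; w] \in X & (w != c1) && (w != c2).
Proof.
move=> [sX dX]; rewrite -dX /deg => dv.
case: (pickP [pred w | [&& [set v; w] \in X, w != c1 & w != c2]]) => [w /and3P[vw ? ?]|only_c].
  by exists w; rewrite ?vw //; apply/andP.
suff /subset_leq_card/(leq_trans dv) :
    [set e in X | v \in e] \subset [set [set v; c1]; [set v; c2]].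
  by rewrite cards2; case: eqVneq.
apply/subsetP => e; rewrite inE => /andP[eX ve]; have [w Ew] := edge_at sX eX ve.
move: (only_c w); rewrite /= -Ew eX /= => /negbT; rewrite negb_and !negbK Ew !inE.
by case/orP=> /eqP->; rewrite eqxx ?orbT.
Qed.
End Switching.

Ltac switch_step p q r s v :=
  apply: (tss_path_switch (p := p) (q := q) (r := r) (s := s) (v := v)) => //;
  [graph_solve .. | move=> ?].

Ltac switch_done :=
  match goal with
  | |- tss_path _ ?X ?X 0 => exact: tss_path0
  | |- tss_path _ ?X ?Y 0 => have -> : Y = X by switch_ext
  end; exact: tss_path0.

Section Configurations.
Variables (n : nat) (d : 'I_n -> nat) (G : graph n) (b1 b2 b3 b4 : 'I_n).
Hypotheses (GG : in_Gnd d G) (Gsw : switchable G b1 b2 b3 b4).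

Lemma tss_path_common_nbr_diagonal v :
  [set b1; b4] \notin G -> [set b2; b3] \notin G -> v \notin [set b1; b2; b3; b4] ->
  common_nbr G b1 b4 v || common_nbr G b2 b3 v ->
  tss_path d G (switch G b1 b2 b3 b4) 2.
Proof.
move=> n14 n23 vD /orP[vpair|vpair];
  by switch_step b1 b2 b4 b3 v; switch_step b1 b4 b3 b2 v; switch_done.
Qed.

Lemma tss_path_triangle u w :
  u \notin [set b1; b2; b3; b4] -> w \notin [set b1; b2; b3; b4] ->
  [set b1; u] \in G -> [set b1; w] \in G -> [set u; w] \in G -> [set b4; u] \notin G ->
  tss_path d G (switch G b1 b2 b3 b4) 2.
Proof.
move=> uD wD e1u e1w euw n4u; have uw := edge_neq (proj1 GG) euw.
by switch_step b1 u b3 b4 w; switch_step b1 b2 u b4 w; switch_done.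
Qed.

Hypothesis e14 : [set b1; b4] \in G.

Lemma tss_path_private_nbr x :
  x \notin [set b1; b2; b3; b4] -> [set b3; x] \in G -> [set b2; x] \notin G ->
  tss_path d G (switch G b1 b2 b3 b4) 2.
Proof.
move=> xD e3x n2x.
by switch_step b1 b2 b3 x b4; switch_step b2 x b4 b3 b1; switch_done.
Qed.

Lemma tss_path_both_diagonals x :
  [set b2; b3] \in G -> x \notin [set b1; b2; b3; b4] ->
  [set b3; x] \in G -> [set b2; x] \in G ->
  tss_path d G (switch G b1 b2 b3 b4) 2.
Proof.
move=> e23 xD e3x e2x.
by switch_step b3 b2 b1 b4 x; switch_step b1 b2 b4 b3 x; switch_done.
Qed.

Lemma tss_path_shared_nbrs x y :
  [set b2; b3] \notin G -> x \notin [set b1; b2; b3; b4] -> y \notin [set b1; b2; b3; b4] ->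
  x != y -> [set b3; x] \in G -> [set b2; x] \in G -> [set b3; y] \in G -> [set b2; y] \in G ->
  [set b4; x] \notin G -> [set b4; y] \notin G ->
  tss_path d G (switch G b1 b2 b3 b4) 4.
Proof.
move=> n23 xD yD xy e3x e2x e3y e2y n4x n4y.
by switch_step b3 b4 b2 y x; switch_step b4 b1 x b3 b2; switch_step b1 b2 b4 y b3;
  switch_step b4 x b2 b3 y; switch_done.
Qed.
End Configurations.

Section Reductions.
Variables (n : nat) (d : 'I_n -> nat) (G : graph n) (b1 b2 b3 b4 : 'I_n).
Hypotheses (GG : in_Gnd d G) (Gsw : switchable G b1 b2 b3 b4).

Lemma tss_path_common_nbr x y v :
  [set b1; b4] \notin G -> [set b2; b3] \notin G ->
  x \in [set b1; b2; b3; b4] -> y \in [set b1; b2; b3; b4] -> x != y ->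
  v \notin [set b1; b2; b3; b4] -> common_nbr G x y v ->
  exists k, k <= 4 /\ tss_path d G (switch G b1 b2 b3 b4) k.
Proof.
move=> n14 n23 xD yD xy vD vxy.
have [vpair | vdiag] :
    [|| common_nbr G b1 b2 v, common_nbr G b3 b4 v, common_nbr G b1 b3 v
      | common_nbr G b2 b4 v] \/ (common_nbr G b1 b4 v || common_nbr G b2 b3 v).
  move: xD yD xy vxy; rewrite !inE -!orbA.
  move=> /or4P[]/eqP-> /or4P[]/eqP->; rewrite ?eqxx //= => _ ?;
    by [left; graph_solve | right; graph_solve].
  by exists 1; split=> //; switch_step b1 b2 b3 b4 v; switch_done.
by exists 2; split=> //; exact: (tss_path_common_nbr_diagonal GG Gsw n14 n23 vD vdiag).
Qed.

Lemma tss_path_diagonal : [set b1; b4] \in G -> 3 <= d b3 ->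
  exists k, k <= 4 /\ tss_path d G (switch G b1 b2 b3 b4) k.
Proof.
move=> e14 deg3; set D := [set b1; b2; b3; b4].
case: (pickP [pred x | [&& x \notin D, [set b3; x] \in G & [set b2; x] \notin G]]).
  move=> x /and3P[xD e3x n2x]; exists 2; split=> //.
  exact: (tss_path_private_nbr GG Gsw e14 xD e3x n2x).
move=> no32.
case: (pickP [pred x | [&& x \notin D, [set b2; x] \in G & [set b3; x] \notin G]]).
  move=> x /and3P[xD e2x n3x]; exists 2; split=> //.
  rewrite switch_flip switch_swap.
  by apply: (tss_path_private_nbr GG (switchable_swap (switchable_flip Gsw)) _ _ e2x n3x);
    graph_solve.
move=> no23.
have shared z : z \notin D -> [set b3; z] \in G -> [set b2; z] \in G.
  by move=> zD e3z; move: (no32 z); rewrite /= zD e3z => /negbFE.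
have outside z : [set b3; z] \in G -> z != b2 -> z != b4 -> z \notin D.
  move=> e3z zb2 zb4; have b3z := edge_neq (proj1 GG) e3z.
  have zb1 : z != b1 by apply: contraTneq e3z => ->; graph_solve.
  by rewrite !inE; graph_solve.
have [x e3x /andP[xb2 xb4]] := exists_nbr_avoiding b2 b4 GG deg3.
have xD := outside x e3x xb2 xb4; have e2x := shared x xD e3x.
have [e23 | n23] := boolP ([set b2; b3] \in G).
  by exists 2; split=> //; exact: (tss_path_both_diagonals GG Gsw e14 e23 xD e3x e2x).
have [y e3y /andP[yb4 yx]] := exists_nbr_avoiding b4 x GG deg3.
have yb2 : y != b2 by apply: contraNneq n23 => <-; rewrite setUC.
have yD := outside y e3y yb2 yb4; have e2y := shared y yD e3y.
have [e4x | n4x] := boolP ([set b4; x] \in G).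
  by exists 1; split=> //; switch_step b1 b2 b3 b4 x; switch_done.
have [e4y | n4y] := boolP ([set b4; y] \in G).
  by exists 1; split=> //; switch_step b1 b2 b3 b4 y; switch_done.
exists 4; split=> //.
by apply: (tss_path_shared_nbrs GG Gsw e14 n23 xD yD); rewrite // eq_sym.
Qed.
End Reductions.

Theorem lemma1 (n : nat) (d : 'I_n -> nat) (G H : graph n) (a1 a2 a3 a4 : 'I_n) :
  graphical d ->
  (forall v, 3 <= d v) ->
  switch_via d G H [set [set a1; a2]; [set a3; a4]] [set [set a1; a3]; [set a2; a4]] ->
  let D := [set a1; a2; a3; a4] in
  let a := quad a1 a2 a3 a4 in
  let A := fun j : 'I_4 => nbhd G (a j) :\: D in
  ( ([set a1; a4] \in G \/ [set a2; a3] \in G)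
    \/ ([set a1; a4] \notin G /\ [set a2; a3] \notin G /\
        exists x y, [/\ x \in D, y \in D, x != y &
          exists v, [/\ v \notin D, v \in nbhd G x & v \in nbhd G y]])
    \/ (exists (j : 'I_4) (u w : 'I_n),
          [/\ [set a j; u] \in G, [set a j; w] \in G, [set u; w] \in G &
              [/\ u \notin D, w \notin D & u \notin A (rev_ord j)]]) ) ->
  exists k, k <= 4 /\ tss_path d G H k.
Proof.
move=> _ deg3 /switch_viaE[GG Gsw ->] D a A.
case=> [[e14 | e23] | [[n14 [n23 [x [y [xD yD xy [v [vD xv yv]]]]]]] |
        [j [u [w [eju ejw euw [uD wD uA]]]]]]].
- exact: (tss_path_diagonal GG Gsw e14 (deg3 a3)).
- rewrite switch_flip.
  exact: (tss_path_diagonal GG (switchable_flip Gsw) e23 (deg3 a4)).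
- rewrite !inE in xv yv.
  by apply: (tss_path_common_nbr GG Gsw n14 n23 xD yD xy vD); apply/andP.
- move: uA; rewrite in_setD uD inE => nu.
  exists 2; split=> //.
  case: j eju ejw nu => -[|[|[|[|//]]]] lt_j4; rewrite /a /quad /= => eju ejw nu.
  + exact: (tss_path_triangle GG Gsw uD wD eju ejw euw nu).
  + rewrite switch_flip.
    by apply: (tss_path_triangle GG (switchable_flip Gsw) _ _ eju ejw euw nu); graph_solve.
  + rewrite switch_swap.
    by apply: (tss_path_triangle GG (switchable_swap Gsw) _ _ eju ejw euw nu); graph_solve.
  + rewrite switch_swap switch_flip.
    by apply: (tss_path_triangle GG (switchable_flip (switchable_swap Gsw)) _ _ eju ejw euw nu);
      graph_solve.
Qed.
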